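(* Let $\mathcal{K}^{\langle\infty\rangle}$ be an unbounded simple nested fractal. There exists a constant $C_8$ such that for every $M\in\mathbb{Z}$, every $x\in\mathcal{K}^{\langle\infty\rangle}$ and every integer $n\ge1$, $$\#\mathcal{L}_{M,n,x}\le C_8\,n^{d_f},$$ where $d_f=\log N/\log L$.
   Context: Setting: $L>1$, $N\ge2$, $\nu_1=0,\dots,\nu_N\in\mathbb{R}^2$, $\Psi_i(x)=x/L+\nu_i$, and $\mathcal{K}^{\langle 0\rangle}=\bigcup_i\Psi_i(\mathcal{K}^{\langle 0\rangle})$ is a planar simple nested fractal (with $V_0^{\langle0\rangle}$ its set of essential fixed points, $k=\#V_0^{\langle0\rangle}\ge3$). $\mathcal{K}^{\langle M\rangle}=L^M\mathcal{K}^{\langle 0\rangle}$, $\mathcal{K}^{\langle\infty\rangle}=\bigcup_{M\ge0}\mathcal{K}^{\langle M\rangle}$. An $M$-complex is $\mathcal{K}^{\langle M\rangle}+\sum_{j=M+1}^{J}L^j\nu_{i_j}$ ($J\ge M+1$, $i_j\in\{1,\dots,N\}$); $\mathcal{T}_M$ is the set of all $M$-complexes. For fixed $x$: $\mathcal{L}_{M,1,x}=\{\Delta_M\in\mathcal{T}_M: x\in\Delta_M\}$ and, for $n\ge1$, $\mathcal{L}_{M,n+1,x}=\{\Delta_M\in\mathcal{T}_M\setminus\bigcup_{i=1}^n\mathcal{L}_{M,i,x}:\ \exists\,\widetilde{\Delta}_M\in\mathcal{L}_{M,n,x},\ \widetilde{\Delta}_M\cap\Delta_M\ne\emptyset\}$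 (the $M$-complexes ''at graph distance $n$'' from $x$). *)

From HB Require Import structures.
From mathcomp Require Import all_boot all_order all_algebra.
From mathcomp Require Import all_classical all_reals all_analysis.
Set Implicit Arguments. Unset Strict Implicit. Unset Printing Implicit Defensive.
Import Order.TTheory GRing.Theory Num.Theory.
Import numFieldNormedType.Exports.
Local Open Scope ring_scope.
Local Open Scope classical_set_scope.

Notation pt R := (R * R)%type.

Section NF.
Variables (R : realType) (N : nat) (L : R) (nu : 'I_N -> pt R) (K : set (pt R)).

Definition padd (x y : pt R) : pt R := (x.1 + y.1, x.2 + y.2).
Definition psub (x y : pt R) : pt R := (x.1 - y.1, x.2 - y.2).
Definition pscale (a : R) (x : pt R) : pt R := (a * x.1, a * x.2).
Definition pdot (x y : pt R) : R := x.1 * y.1 + x.2 * y.2.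

Definition Psi (i : 'I_N) (x : pt R) : pt R := padd (pscale L^-1 x) (nu i).

Definition Psiw (w : seq 'I_N) (x : pt R) : pt R := foldr Psi x w.

Definition fixpts : set (pt R) := [set x | exists i, Psi i x = x].

Definition V0 : set (pt R) :=
  [set x | fixpts x /\ exists i j y, i <> j /\ fixpts y /\ Psi i x = Psi j y].

Definition Vn (n : nat) : set (pt R) :=
  [set z | exists w x, size w = n /\ V0 x /\ z = Psiw w x].

(* reflection in the perpendicular bisector of the segment [x,y] *)
Definition refl (x y z : pt R) : pt R :=
  let u := psub y x in
  let m := pscale (2^-1) (padd x y) in
  psub z (pscale (2 * pdot (psub z m) u / pdot u u) u).

Definition bounded2 (U : set (pt R)) : Prop :=
  exists r : R, forall z, U z -> `|z.1| <= r /\ `|z.2| <= r.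

Definition cells_connected : Prop :=
  forall i j : 'I_N, exists (m : nat) (p : nat -> 'I_N),
    p 0%N = i /\ p m = j /\
    forall k, (k < m)%N -> (Psi (p k) @` K) `&` (Psi (p k.+1) @` K) !=set0.

(* Planar simple nested fractal with translation-only similitudes,
   nu_1 = 0, and at least 3 essential fixed points. *)
Record simple_nested_fractal : Prop := {
  nf_L : 1 < L;
  nf_N : (2 <= N)%N;
  nf_nu1 : forall i : 'I_N, val i = 0%N -> nu i = (0, 0);
  nf_compact : compact K;
  nf_nonempty : K !=set0;
  nf_attractor : K = \bigcup_(i in [set: 'I_N]) (Psi i @` K);
  nf_osc : exists U : set (pt R), open U /\ bounded2 U /\ U !=set0 /\
      (forall i, Psi i @` U `<=` U) /\
      (forall i j, i <> j -> (Psi i @` U) `&` (Psi j @` U) = set0);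
  nf_k3 : exists a b c, V0 a /\ V0 b /\ V0 c /\ a <> b /\ b <> c /\ a <> c;
  nf_connected : cells_connected;
  nf_symmetry : forall x y, V0 x -> V0 y -> x <> y ->
      forall n, refl x y @` Vn n = Vn n;
  nf_nesting : forall i j, i <> j ->
      (Psi i @` K) `&` (Psi j @` K) = (Psi i @` V0) `&` (Psi j @` V0)
}.

Definition KM (M : int) : set (pt R) := pscale (L ^ M) @` K.

Definition Kinf : set (pt R) := [set z | exists M : nat, KM M z].

(* M-complexes: K^<M> + sum_{j=M+1}^{J} L^j nu_{i_j}, J >= M+1;
   here J = M + m + 1 and w k = i_{M+1+k}. *)
Definition complex (M : int) (D : set (pt R)) : Prop :=
  exists (m : nat) (w : 'I_m.+1 -> 'I_N),
    let s : pt R := (\sum_(k < m.+1) L ^ (M + 1 + (k : nat)%:Z) * (nu (w k)).1,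
                     \sum_(k < m.+1) L ^ (M + 1 + (k : nat)%:Z) * (nu (w k)).2) in
    D = padd s @` KM M.

(* Lpair M x n = (L_{M,n+1,x}, union_{i=1}^{n+1} L_{M,i,x}) *)
Fixpoint Lpair (M : int) (x : pt R) (n : nat) : set (set (pt R)) * set (set (pt R)) :=
  match n with
  | 0%N => let A := [set D | complex M D /\ D x] in (A, A)
  | n'.+1 =>
      let p := Lpair M x n' in
      let B := [set D | complex M D /\ ~ p.2 D /\
                        exists D', p.1 D' /\ D' `&` D !=set0] in
      (B, p.2 `|` B)
  end.

(* L_{M,n,x} for n >= 1 (empty for n = 0, never used) *)
Definition Lset (M : int) (n : nat) (x : pt R) : set (set (pt R)) :=
  if n is n'.+1 then (Lpair M x n').1 else set0.

End NF.

From HB Require Import structures.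
From mathcomp Require Import all_boot all_order all_algebra.
From mathcomp Require Import all_classical all_reals all_analysis.
From mathcomp Require Import ring lra.
Import Order.TTheory GRing.Theory Num.Theory.
Import numFieldNormedType.Exports.
Local Open Scope ring_scope.
Local Open Scope classical_set_scope.
Set Implicit Arguments. Unset Strict Implicit. Unset Printing Implicit Defensive.

(* Every M-complex is L^(M+1) s + L^M K with s = sum_(i < P) L^i nu_(w i), and
   a complex of L_{M,n,x} lies within n diam(L^M K) of x.  Pick k with
   n <= L^k and split s = s' + L^k t along its first k digits: the prefix s'
   takes at most N^k values, while t lies in a box of fixed size around
   x / L^(M+1+k).  By the open set condition distinct sums of the form t are
   uniformly separated, so boundedly many of them fit in that box.  Hence
   #L_{M,n,x} <= C N^k <= C N n^(log N / log L). *)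

Section SupDistance.
Variable R : numDomainType.

Definition close (r : R) (z z' : R * R) :=
  `|z.1 - z'.1| <= r /\ `|z.2 - z'.2| <= r.

Definition separated (r : R) (z z' : R * R) :=
  r <= `|z.1 - z'.1| \/ r <= `|z.2 - z'.2|.

Lemma close_trans r1 r2 a b c :
  close r1 a b -> close r2 b c -> close (r1 + r2) a c.
Proof.
move=> [h1 h2] [k1 k2]; split.
  by rewrite (le_trans _ (lerD h1 k1)) // -(subrKA b.1) ler_normD.
by rewrite (le_trans _ (lerD h2 k2)) // -(subrKA b.2) ler_normD.
Qed.

End SupDistance.

Section Packing.
Variable R : archiRealFieldType.

Lemma truncn_lt_width (s rho d : R) : 0 < d -> `|s| <= rho ->
  (Num.truncn ((s + rho) / d) < (Num.truncn (2 * rho / d)).+1)%N.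
Proof.
move=> d0; rewrite ler_norml => /andP [h1 h2].
have hs : 0 <= s + rho by lra.
rewrite truncn_lt_nat; last by rewrite divr_ge0 // ltW.
apply: le_lt_trans (truncnS_gt _).
by rewrite ler_pM2r ?invr_gt0 //; lra.
Qed.

Lemma eq_truncn_dist_lt (d u w : R) : 0 < d -> 0 <= u -> 0 <= w ->
  Num.truncn (u / d) = Num.truncn (w / d) -> `|u - w| < d.
Proof.
move=> d0 u0 w0 e.
have /andP [a1 a2] := truncn_itv (divr_ge0 u0 (ltW d0)).
have /andP [b1 b2] := truncn_itv (divr_ge0 w0 (ltW d0)).
rewrite e in a1 a2.
rewrite -[u](divfK (lt0r_neq0 d0)) -[w](divfK (lt0r_neq0 d0)) -mulrBl normrM.
rewrite (gtr0_norm d0) -[X in _ < X]mul1r ltr_pM2r // ltr_norml.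
apply/andP; split; lra.
Qed.

(* Points with equal keys lie in distinct cells of the grid of mesh d. *)
Lemma packing_bound (X : finType) m (key : 'I_m -> X) (t : 'I_m -> R * R)
    (c : R * R) (rho d : R) : 0 < d ->
  (forall k, close rho (t k) c) ->
  (forall a b, t a <> t b -> separated d (t a) (t b)) ->
  (forall a b, key a = key b -> t a = t b -> a = b) ->
  (m <= #|X| * (Num.truncn (2 * rho / d)).+1 ^ 2)%N.
Proof.
move=> d0 tc tsep tinj.
pose G := (Num.truncn (2 * rho / d)).+1.
pose cell (s : R) : 'I_G := inord (Num.truncn ((s + rho) / d)).
have cell_eq s s' : `|s| <= rho -> `|s'| <= rho -> cell s = cell s' ->
    `|s - s'| < d.
  move=> hs hs' /(congr1 (@nat_of_ord _)); rewrite !inordK ?truncn_lt_width //.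
  move: hs hs'; rewrite !ler_norml => /andP [? ?] /andP [? ?] e.
  have := eq_truncn_dist_lt d0 _ _ e.
  by rewrite opprD addrACA subrr addr0; apply; lra.
pose g k := (key k, (cell ((t k).1 - c.1), cell ((t k).2 - c.2))).
have ginj : injective g.
  move=> a b [ek e1 e2]; apply: tinj => //.
  have [//|/eqP ne] := eqVneq (t a) (t b); exfalso.
  have [[ha1 ha2] [hb1 hb2]] := (tc a, tc b).
  have := cell_eq _ _ ha1 hb1 e1; have := cell_eq _ _ ha2 hb2 e2.
  rewrite !opprB !addrA !subrK !ltNge.
  by case: (tsep _ _ ne) => ->.
by have := leq_card g ginj; rewrite card_ord !card_prod card_ord mulnA.
Qed.

End Packing.

Lemma norm_geometric_sum_le (R : realFieldType) (L c : R) (F : nat -> R) k :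
  1 < L -> (forall i, `|F i| <= c) ->
  `|\sum_(i < k) L ^+ i * F i| <= L ^+ k * (c / (L - 1)).
Proof.
move=> L1 hF.
have L10 : 0 < L - 1 by rewrite subr_gt0.
have c0 : 0 <= c by exact: le_trans (hF 0%N).
suff : `|\sum_(i < k) L ^+ i * F i| <= (L ^+ k - 1) * (c / (L - 1)).
  by move/le_trans; apply; rewrite ler_wpM2r ?divr_ge0 ?(ltW L10) // lerBlDr lerDl.
elim: k => [|k IH]; first by rewrite big_ord0 normr0 expr0 subrr mul0r.
rewrite big_ord_recr /= (le_trans (ler_normD _ _)) //.
have Lk : 0 < L ^+ k by rewrite exprn_gt0 // (lt_trans ltr01 L1).
have -> : (L ^+ k.+1 - 1) * (c / (L - 1)) = (L ^+ k - 1) * (c / (L - 1)) + L ^+ k * c.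
  by rewrite exprS; field; rewrite lt0r_neq0.
by rewrite lerD // normrM gtr0_norm // ler_wpM2l // ltW.
Qed.

Lemma rescaled_tail_bound (R : realFieldType) (a l lk r q p y t x z : R) :
  0 < a -> 1 <= l -> 1 <= lk ->
  `|z - x| <= lk * (2 * r * a) -> z = a * l * (p + lk * t) + a * y ->
  `|y| <= r -> `|p| <= lk * q -> `|t - (a * l * lk)^-1 * x| <= 3 * r + q.
Proof.
move=> a0 l1 lk1 hz ez hy hp.
have r0 : 0 <= r := le_trans (normr_ge0 y) hy.
have lam0 : 0 < a * l * lk by rewrite !mulr_gt0 //; lra.
have -> : t - (a * l * lk)^-1 * x = ((z - x) - a * l * p - a * y) / (a * l * lk).
  by rewrite ez; field; rewrite !lt0r_neq0 //; lra.
rewrite normrM normfV (gtr0_norm lam0) ler_pdivrMr //.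
have al0 : 0 < a * l by rewrite mulr_gt0 //; lra.
have tri : `|z - x - a * l * p - a * y| <= `|z - x| + `|a * l * p| + `|a * y|.
  by rewrite !(le_trans (ler_normB _ _)) // lerD2r ler_normB.
rewrite [`|a * l * p|]normrM [`|a * y|]normrM (gtr0_norm a0) (gtr0_norm al0) in tri.
apply: (le_trans tri).
have h3 : a * l * `|p| <= a * l * (lk * q) by rewrite ler_wpM2l // mulr_ge0 //; lra.
have h4 : a * `|y| <= a * r by rewrite ler_wpM2l // ltW.
have ar0 : 0 <= a * r by rewrite mulr_ge0 // ltW.
have lr0 : 0 <= lk * (2 * r * a) by rewrite !mulr_ge0 //; lra.
nra.
Qed.

Lemma powR_ln_comm (R : realType) (a b c : R) : 0 < a -> 0 < b ->
  a `^ (ln b / c) = b `^ (ln a / c).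
Proof. by move=> a0 b0; rewrite /powR !gt_eqF //; congr expR; ring. Qed.

Lemma exists_scale_exponent (R : realType) (L : R) (N n : nat) :
  1 < L -> (1 <= N)%N -> (1 <= n)%N -> exists k,
  n%:R <= L ^+ k /\ N%:R ^+ k <= N%:R * n%:R `^ (ln (N%:R : R) / ln L).
Proof.
move=> L1 N1 n1.
have L0 : 0 < L by exact: lt_trans L1.
have N0 : (0 : R) < N%:R by rewrite ltr0n.
have n0 : (0 : R) < n%:R by rewrite ltr0n.
pose e := ln (n%:R : R) / ln L.
have e0 : 0 <= e by rewrite divr_ge0 // ?ln_ge0 ?ler1n // ltW // ln_gt0.
exists (Num.truncn e).+1; split.
  rewrite -powR_mulrn ?(ltW L0) //.
  rewrite (le_trans _ (ler_powR (ltW L1) (ltW (truncnS_gt e)))) //.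
  by rewrite /powR gt_eqF // /e divfK ?lnK // lt0r_neq0 // ln_gt0.
rewrite exprS ler_wpM2l ?ler0n // -powR_mulrn ?(ltW N0) // -powR_ln_comm //.
by apply: ler_powR; rewrite ?ler1n ?truncn_le.
Qed.

Lemma compact_coord_bounded (R : realType) (K : set (R * R)) : compact K ->
  exists r : R, forall z, K z -> `|z.1| <= r /\ `|z.2| <= r.
Proof.
move=> /compact_bounded [M0 [_ HM]].
have M0lt : M0 < `|M0| + 1 by rewrite (le_lt_trans (ler_norm M0)) // ltrDl.
exists (`|M0| + 1) => z /(HM _ M0lt) /=; rewrite prod_normE => hz.
by split; apply: le_trans hz; rewrite le_max lexx ?orbT.
Qed.

Lemma finite_coord_bounded (R : realDomainType) (I : finType) (u : I -> R * R) :
  exists c, forall i, `|(u i).1| <= c /\ `|(u i).2| <= c.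
Proof.
exists (\sum_i (`|(u i).1| + `|(u i).2|)) => i.
have le_sum : `|(u i).1| + `|(u i).2| <= \sum_i (`|(u i).1| + `|(u i).2|).
  by rewrite (bigD1 i) //= lerDl sumr_ge0.
by split; apply: le_trans le_sum; rewrite ?lerDl ?lerDr.
Qed.

Lemma open_coord_box (R : realType) (U : set (R * R)) p : open U -> U p ->
  exists2 e : R, 0 < e & forall z, close e z p -> U z.
Proof.
move=> oU Up; have /nbhs_ballP [e e0 He] : nbhs p U by exact: open_nbhs_nbhs.
exists (e / 2) => [|z [h1 h2]]; first by rewrite divr_gt0.
have e0' : 0 < e := e0.
have half : e / 2 < e by rewrite ltr_pdivrMr // ltr_pMr // ltr1n.
by apply: He; split; rewrite /ball /= distrC (le_lt_trans _ half).
Qed.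

Lemma pscale_inj (R : realType) (c : R) : c != 0 -> injective (pscale c).
Proof.
by move=> c0 [a1 a2] [b1 b2] [/(mulfI c0) -> /(mulfI c0) ->].
Qed.

Section NuSums.
Variables (R : realType) (N : nat) (L : R) (nu : 'I_N -> pt R).
Hypothesis L1 : 1 < L.

Let L0 : L != 0. Proof. by rewrite lt0r_neq0 // (lt_trans ltr01 L1). Qed.

Definition nu_sum (p : nat) (v : nat -> 'I_N) : pt R :=
  (\sum_(i < p) L ^+ i * (nu (v i)).1, \sum_(i < p) L ^+ i * (nu (v i)).2).

Lemma nu_sum_split a b v : nu_sum (a + b) v =
  padd (nu_sum a v) (pscale (L ^+ a) (nu_sum b (fun i => v (a + i)%N))).
Proof.
rewrite /nu_sum /padd /pscale /=; congr pair; rewrite big_split_ord /= mulr_sumr;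
  by congr (_ + _); apply: eq_bigr => i _; rewrite exprD mulrA.
Qed.

(* The witness is the word [:: v p.-1; ...; v 0]. *)
Lemma scale_Psiw_nu_sum p v : exists2 w : seq 'I_N, size w = p &
  forall y, pscale (L ^+ p) (Psiw L nu w y) = padd y (pscale L (nu_sum p v)).
Proof.
elim: p => [|p [w sw Hw]].
  exists [::] => // -[y1 y2].
  by rewrite /pscale /padd /nu_sum /= !big_ord0 !mulr0 !addr0 !mul1r.
exists (v p :: w) => [|y]; first by rewrite /= sw.
have := Hw y; rewrite /pscale /padd /nu_sum /= !big_ord_recr /=.
case: (Psiw L nu w y) => q1 q2 /= [e1 e2].
by congr pair; rewrite exprSr mulrDr -mulrA mulVKf // ?e1 ?e2; ring.
Qed.

Lemma Psi_inj i : injective (Psi L nu i).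
Proof.
have LV0 : L^-1 != 0 by rewrite invr_eq0.
move=> [a1 a2] [b1 b2]; rewrite /Psi /padd /pscale /= => -[e1 e2].
by move/addIr: e1 => /(mulfI LV0) ->; move/addIr: e2 => /(mulfI LV0) ->.
Qed.

Variable i0 : 'I_N.
Hypothesis nu0 : nu i0 = (0, 0).

Definition pad (p : nat) (v : nat -> 'I_N) (i : nat) : 'I_N :=
  if (i < p)%N then v i else i0.

Lemma nu_sum_pad p q v : (p <= q)%N -> nu_sum q (pad p v) = nu_sum p v.
Proof.
move=> pq; rewrite /nu_sum; congr pair; [
  rewrite (big_ord_widen _ (fun i => L ^+ i * (nu (v i)).1) pq) |
  rewrite (big_ord_widen _ (fun i => L ^+ i * (nu (v i)).2) pq)];
by rewrite [RHS]big_mkcond; apply: eq_bigr => i _; rewrite /pad; case: ifP => // _;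
  rewrite nu0 mulr0.
Qed.

Section OpenSet.
Variable U : set (pt R).
Hypothesis Psi_sub : forall i, Psi L nu i @` U `<=` U.
Hypothesis Psi_disj : forall i j, i <> j -> Psi L nu i @` U `&` Psi L nu j @` U = set0.

Lemma Psiw_sub w y : U y -> U (Psiw L nu w y).
Proof.
by elim: w => //= i w IH /IH Uy; apply: (@Psi_sub i); exists (Psiw L nu w y).
Qed.

Lemma Psiw_disj w w' y y' : size w = size w' -> w <> w' -> U y -> U y' ->
  Psiw L nu w y <> Psiw L nu w' y'.
Proof.
elim: w w' => [|i w IH] [|j w'] //= [sw] nw Uy Uy' e.
have [ij|ij] := eqVneq i j.
  by subst j; apply: (IH w' sw _ Uy Uy' (Psi_inj e)) => ww; apply: nw; rewrite ww.
have : (Psi L nu i @` U `&` Psi L nu j @` U) (Psi L nu i (Psiw L nu w y)).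
  split; first by exists (Psiw L nu w y) => //; exact: Psiw_sub.
  by rewrite e; exists (Psiw L nu w' y') => //; exact: Psiw_sub.
by rewrite Psi_disj //; apply/eqP.
Qed.

(* Two translations at sup-distance < e / L would yield two distinct words
   of length p mapping points of an e-box inside U to the same point. *)
Lemma nu_sum_separated_eqsize : open U -> U !=set0 -> exists2 d : R, 0 < d &
  forall p v v', nu_sum p v <> nu_sum p v' -> separated d (nu_sum p v) (nu_sum p v').
Proof.
move=> oU [p0 Up0]; have [e e0 He] := open_coord_box oU Up0.
have L0' : 0 < L := lt_trans ltr01 L1.
exists (e / L) => [|p v v' ne]; first by rewrite divr_gt0.
case: (lerP (e / L) `|(nu_sum p v).1 - (nu_sum p v').1|) => h1; first by left.
case: (lerP (e / L) `|(nu_sum p v).2 - (nu_sum p v').2|) => h2; first by right.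
exfalso.
have [w sw Hw] := scale_Psiw_nu_sum p v.
have [w' sw' Hw'] := scale_Psiw_nu_sum p v'.
move: ne h1 h2 Hw Hw'; case: (nu_sum p v) => t1 t2; case: (nu_sum p v') => u1 u2 /=.
move=> ne h1 h2 Hw Hw'.
have ww : w <> w'.
  move=> ww; apply: ne; have := Hw p0; rewrite ww Hw'; case: p0 {Up0 He} => q1 q2.
  rewrite /padd /pscale /= => -[/addrI e1 /addrI e2].
  by rewrite (mulfI L0 e1) (mulfI L0 e2).
pose h := (L / 2 * (t1 - u1), L / 2 * (t2 - u2)).
have hh s : `|s| < e / L -> `|L / 2 * s| <= e.
  rewrite ltr_pdivlMr // normrM gtr0_norm ?divr_gt0 // => hs.
  have : 0 <= `|s| by [].
  lra.
apply: (Psiw_disj (_ : size w = size w') ww (He (psub p0 h) _) (He (padd p0 h) _)).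
- by rewrite sw sw'.
- by split; rewrite /= addrAC subrr add0r normrN hh.
- by split; rewrite /= addrAC subrr add0r hh.
apply: (@pscale_inj _ (L ^+ p)); first by rewrite expf_neq0.
by rewrite Hw Hw' /padd /pscale /psub /=; congr pair; field.
Qed.

Lemma nu_sum_separated : open U -> U !=set0 -> exists2 d : R, 0 < d &
  forall p v p' v', nu_sum p v <> nu_sum p' v' ->
  separated d (nu_sum p v) (nu_sum p' v').
Proof.
move=> oU U0; have [d d0 hsep] := nu_sum_separated_eqsize oU U0.
exists d => // p v p' v'.
rewrite -(nu_sum_pad v (leq_maxl p p')) -(nu_sum_pad v' (leq_maxr p p')).
exact: hsep.
Qed.

End OpenSet.
End NuSums.

Section Complexes.
Variables (R : realType) (N : nat) (L : R) (nu : 'I_N -> pt R) (K : set (pt R)).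
Hypothesis L1 : 1 < L.

Let L0 : 0 < L. Proof. exact: lt_trans ltr01 L1. Qed.

Definition complex_of (M : int) (s : pt R) : set (pt R) :=
  padd (pscale (L ^ M * L) s) @` KM L K M.

Variable i0 : 'I_N.
Hypothesis nu0 : nu i0 = (0, 0).

Lemma complex_repr M D k : complex L nu K M D ->
  exists W P, (k <= P)%N /\ D = complex_of M (nu_sum L nu P W).
Proof.
move=> [m [w ->]]; exists (pad i0 m.+1 (fun i => w (inord i))), (maxn m.+1 k).
split; first exact: leq_maxr.
rewrite /complex_of nu_sum_pad ?leq_maxl //; congr (padd _ @` _).
rewrite /nu_sum /pscale /=; congr pair; rewrite mulr_sumr; apply: eq_bigr => i _;
  by rewrite inord_val !expfzDr ?lt0r_neq0 // expr1z -exprnP !mulrA.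
Qed.

Variable rK : R.
Hypothesis K_bound : forall z, K z -> `|z.1| <= rK /\ `|z.2| <= rK.

Lemma complex_close M D z z' : complex L nu K M D -> D z -> D z' ->
  close (2 * rK * L ^ M) z z'.
Proof.
have LM : 0 < L ^ M by rewrite exprz_gt0.
have hy (s a b : R) : `|a| <= rK -> `|b| <= rK ->
    `|s + L ^ M * a - (s + L ^ M * b)| <= 2 * rK * L ^ M.
  move=> ha hb; rewrite opprD addrACA subrr add0r -mulrBr normrM gtr0_norm //.
  by rewrite mulrC ler_pM2r // (le_trans (ler_normB _ _)) //; lra.
move=> [m [w ->]] [_ [y Ky <-] <-] [_ [y' Ky' <-] <-].
have [[h1 h2] [h1' h2']] := (K_bound Ky, K_bound Ky').
by split; apply: hy.
Qed.

Lemma Lpair_near M x n D : (Lpair L nu K M x n).1 D ->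
  complex L nu K M D /\ forall z, D z -> close (n.+1%:R * (2 * rK * L ^ M)) z x.
Proof.
elim: n D => [|n IH] D /=.
  by move=> [cD Dx]; split => // z Dz; rewrite mul1r; exact: complex_close Dz Dx.
move=> [cD [_ [D' [/IH [_ near'] [y [D'y Dy]]]]]]; split => // z Dz.
rewrite mulrSr mulrDl mul1r addrC; apply: close_trans (near' _ D'y).
exact: complex_close Dz Dy.
Qed.

Variables (y0 : pt R) (c : R).
Hypothesis K_y0 : K y0.
Hypothesis nu_bound : forall j, `|(nu j).1| <= c /\ `|(nu j).2| <= c.

Lemma eq_nu_sum p (v v' : nat -> 'I_N) : (forall i : 'I_p, v i = v' i) ->
  nu_sum L nu p v = nu_sum L nu p v'.
Proof.
by move=> vv'; rewrite /nu_sum; congr pair; apply: eq_bigr => i _; rewrite vv'.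
Qed.

(* After rescaling by L^(M+1+k), the distance to x contributes 2 rK to the
   radius, the offset inside L^M K contributes rK, and the first k digits
   contribute c / (L - 1). *)
Lemma Lset_tail M x n k D : Lset L nu K M n.+1 x D -> n.+1%:R <= L ^+ k ->
  exists W P, let t := nu_sum L nu P (fun i => W (k + i)%N) in
  D = complex_of M (padd (nu_sum L nu k W) (pscale (L ^+ k) t)) /\
  close (3 * rK + c / (L - 1)) t (pscale (L ^ M * L * L ^+ k)^-1 x).
Proof.
move=> /Lpair_near [cD near] nLk.
have [W [P [kP eD]]] := complex_repr k cD.
exists W, (P - k)%N => t; rewrite eD -nu_sum_split subnKC //; split=> //.
have LM : 0 < L ^ M by rewrite exprz_gt0.
have Lk1 : 1 <= L ^+ k by rewrite exprn_ege1 // ltW.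
have [hy1 hy2] := K_bound K_y0.
have rK0 : 0 <= rK by apply: le_trans hy1.
pose z := padd (pscale (L ^ M * L) (nu_sum L nu P W)) (pscale (L ^ M) y0).
have [hz1 hz2] : close (L ^+ k * (2 * rK * L ^ M)) z x.
  have [h1 h2] : close (n.+1%:R * (2 * rK * L ^ M)) z x.
    by apply: near; rewrite eD; exists (pscale (L ^ M) y0) => //; exists y0.
  by split; apply: le_trans (ler_wpM2r _ nLk) => //; rewrite !mulr_ge0 // ltW.
rewrite -(subnKC kP) nu_sum_split -/t in z hz1 hz2 *.
have pre_bound : `|(nu_sum L nu k W).1| <= L ^+ k * (c / (L - 1)) /\
                 `|(nu_sum L nu k W).2| <= L ^+ k * (c / (L - 1)).
  split; [apply: (norm_geometric_sum_le (F := fun i => (nu (W i)).1)) |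
          apply: (norm_geometric_sum_le (F := fun i => (nu (W i)).2))];
  by move=> // i; case: (nu_bound (W i)).
split.
  exact: (rescaled_tail_bound LM (ltW L1) Lk1 hz1 erefl hy1 pre_bound.1).
exact: (rescaled_tail_bound LM (ltW L1) Lk1 hz2 erefl hy2 pre_bound.2).
Qed.

Variable d : R.
Hypothesis d0 : 0 < d.
Hypothesis nu_sum_sep : forall p v p' v', nu_sum L nu p v <> nu_sum L nu p' v' ->
  separated d (nu_sum L nu p v) (nu_sum L nu p' v').

Lemma Lset_card_le M x n k m (f : 'I_m -> set (pt R)) : injective f ->
  (forall j, Lset L nu K M n.+1 x (f j)) -> n.+1%:R <= L ^+ k ->
  (m <= N ^ k * (Num.truncn (2 * (3 * rK + c / (L - 1)) / d)).+1 ^ 2)%N.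
Proof.
move=> finj Lf nLk.
have /choice [g gP] : forall j, exists WP : (nat -> 'I_N) * nat,
    let t := nu_sum L nu WP.2 (fun i => WP.1 (k + i)%N) in
    f j = complex_of M (padd (nu_sum L nu k WP.1) (pscale (L ^+ k) t)) /\
    close (3 * rK + c / (L - 1)) t (pscale (L ^ M * L * L ^+ k)^-1 x).
  by move=> j; have [W [P]] := Lset_tail (Lf j) nLk; exists (W, P).
pose key j := [ffun i : 'I_k => (g j).1 i].
pose t j := nu_sum L nu (g j).2 (fun i => (g j).1 (k + i)%N).
suff : (m <= #|{ffun 'I_k -> 'I_N}| *
               (Num.truncn (2 * (3 * rK + c / (L - 1)) / d)).+1 ^ 2)%N.
  by rewrite card_ffun !card_ord.
apply: (@packing_bound _ _ _ key t _ _ _ d0) => [j|a b|a b ekey et].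
- exact: (gP j).2.
- exact: nu_sum_sep.
apply: finj; rewrite (gP a).1 (gP b).1 -/(t a) -/(t b) et.
congr (complex_of _ (padd _ _)); apply: eq_nu_sum => i.
by have := congr1 (fun h : {ffun 'I_k -> 'I_N} => h i) ekey; rewrite !ffunE.
Qed.

End Complexes.

Theorem lemmaA4 (R : realType) (N : nat) (L : R) (nu : 'I_N -> pt R)
    (K : set (pt R)) :
  simple_nested_fractal L nu K ->
  exists C : R, forall (M : int) (x : pt R), Kinf L K x ->
    forall n : nat, (1 <= n)%N ->
    forall (m : nat) (f : 'I_m -> set (pt R)), injective f ->
      (forall k, Lset L nu K M n x (f k)) ->
      m%:R <= C * (n%:R `^ (ln (N%:R : R) / ln L)).
Proof.
move=> H; have L1 := nf_L H; have N1 : (1 <= N)%N := ltnW (nf_N H).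
have nu0 := nf_nu1 H (i := Ordinal N1) erefl.
have [rK K_bound] := compact_coord_bounded (nf_compact H).
have [y0 K_y0] := nf_nonempty H.
have [c nu_bound] := finite_coord_bounded nu.
have [U [oU [_ [U0 [Psi_sub Psi_disj]]]]] := nf_osc H.
have [d d0 nu_sum_sep] := nu_sum_separated L1 nu0 Psi_sub Psi_disj oU U0.
pose G := (Num.truncn (2 * (3 * rK + c / (L - 1)) / d)).+1.
exists (N * G ^ 2)%:R => M x _ [//|n] _ m f finj Lf.
have [k [nLk Nk]] := exists_scale_exponent L1 N1 (ltn0Sn n).
have := Lset_card_le L1 nu0 K_bound K_y0 nu_bound d0 nu_sum_sep finj Lf nLk.
rewrite -(ler_nat R) => /le_trans; apply.
by rewrite natrM natrX [(N * _)%:R]natrM [leRHS]mulrAC ler_wpM2r.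
Qed.
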